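(* Let $k\ge 2$ and let $\mathbb{R}^+=H_1\sqcup\cdots\sqcup H_k$ be a partition of the positive reals into pairwise disjoint nonempty subsets, each closed under addition and multiplication. Then at least one of the sets $H_i$ is not Lebesgue measurable. *)

From HB Require Import structures.
From mathcomp Require Import all_boot all_order all_algebra.
From mathcomp Require Import all_classical all_reals all_analysis.
Set Implicit Arguments. Unset Strict Implicit. Unset Printing Implicit Defensive.
Import Order.TTheory GRing.Theory Num.Theory.
Local Open Scope classical_set_scope.
Local Open Scope ring_scope.

(* A ⊆ ℝ is Lebesgue measurable iff it is Carathéodory-measurable for the
   Lebesgue outer measure (the outer measure induced by interval length);
   this is the domain of the library's completed_lebesgue_measure. *)
Definition lebesgue_measurable {R : realType} (A : set R) : Prop :=
  ((@wlength R idfun)^*%mu).-cara.-measurable A.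

From HB Require Import structures.
From mathcomp Require Import all_boot all_order all_algebra.
From mathcomp Require Import all_classical all_reals all_analysis.
From mathcomp Require Import measurable_realfun lebesgue_integral_differentiation lra.
Set Implicit Arguments. Unset Strict Implicit. Unset Printing Implicit Defensive.
Import Order.TTheory GRing.Theory Num.Theory.
Import numFieldNormedType.Exports.
Local Open Scope classical_set_scope.
Local Open Scope ring_scope.

(* Suppose every H_i is measurable. As the H_i cover ]0, +oo[, some H_i has
   positive measure, so by Steinhaus' theorem H_i + H_i, and hence H_i itself,
   contains an interval ]a, b[ with 0 <= a. Let y lie in another class H_j.
   For every n, y / n is again in H_j, because the class of y / n contains its
   n-fold sum y. So H_j contains some z < b - a, and with it every positive
   multiple of z; one of these falls into ]a, b[, a contradiction. *)

Section steinhaus.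
Context {R : realType}.
Local Notation mu := (@lebesgue_measure R).

Lemma measurable_reflect (t : R) : measurable_fun [set: R] (fun y => t - y).
Proof. by apply: measurable_funB => //; exact: measurable_cst. Qed.

Lemma lebesgue_measure_reflect (t : R) (A : set R) : measurable A ->
  mu ((fun y => t - y) @^-1` A) = mu A.
Proof.
(* [mf] lets [pushforward mu _] be inferred to be a measure. *)
move=> mA; have mf := measurable_reflect t.
change (pushforward mu ((fun y => t - y) : _ -> measurableTypeR R) A = mu A).
apply/esym/lebesgue_measure_unique => //= _ [[a b]] _ <-.
rewrite /pushforward /=.
have -> : (fun y : R => t - y) @^-1` `]a, b] = `[t - b, t - a[%classic.
  by apply/seteqP; split => y /=; rewrite !in_itv /= => /andP[? ?];
    apply/andP; split; lra.
rewrite !lebesgue_measure_itv /= !lte_fin.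
have -> : (t - b < t - a) = (a < b) by apply/idP/idP => ?; lra.
by case: ifP => // _; congr (_%:E); lra.
Qed.

Lemma ballRE (x r y : R) : ball x r y = (x - r < y < x + r).
Proof. by rewrite /ball /= ltr_distlC. Qed.

(* [3/2 r] is three quarters of the measure of [ball x r]. *)
Lemma lebesgue_density_point (X : set R) : measurable X -> (0 < mu X)%E ->
  exists x r, 0 < r /\ ((3/2 * r)%:E < mu (X `&` ball x r))%E.
Proof.
move=> mX mX0.
have [x [Xx]] : exists x, X x /\
    ((mu (X `&` ball x r) / mu (ball x r))%E @[r --> 0^'+] --> (\1_X x)%:E).
  apply: contrapT => nodensity.
  have : mu.-negligible X.
    apply: negligibleS (lebesgue_density mX) => y Xy dy.
    by apply: nodensity; exists y.
  by move/(negligibleP mu mX) => X0; rewrite X0 ltxx in mX0.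
rewrite indicE (mem_set Xx) => /fine_cvgP[finite_ratio cvg_ratio].
have /(cvgr_gt _ cvg_ratio) ratio_gt : (3/4 : R) < true%:R by rewrite /=; lra.
have : \forall r \near 0^'+, 0 < r /\
    (mu (X `&` ball x r) / mu (ball x r))%E \is a fin_num /\
    3/4 < fine (mu (X `&` ball x r) / mu (ball x r))%E.
  near=> r; split; [near: r; exact: nbhs_right_gt|split].
  - by near: r; exact: finite_ratio.
  - by near: r; exact: ratio_gt.
move=> /filter_ex[r [r0 ratio]]; exists x, r; split => //; move: ratio.
rewrite lebesgue_measure_ball ?ltW // inver (negbTE (lt0r_neq0 _)); last first.
  by rewrite mulr2n; lra.
have muS_ge0 : (0 <= mu (X `&` ball x r))%E := measure_ge0 mu _.
case muS : (mu (X `&` ball x r)) => [s| |] [_] //.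
- by rewrite lte_fin ltr_pdivlMr ?(mulr2n r) => *; lra.
- by rewrite ltry.
- by rewrite muS in muS_ge0.
Unshelve. all: by end_near.
Qed.

(* [X `&` ball x r] and its reflection [t - _] both have measure above [3/2 r]
   and lie in [ball x (3/2 r)], of measure [3 r]; hence they meet. *)
Lemma ball_reflect_meet (X : set R) (x r t : R) : measurable X -> 0 < r ->
  ((3/2 * r)%:E < mu (X `&` ball x r))%E ->
  x * 2 - r / 2 < t < x * 2 + r / 2 -> exists2 u, X u & X (t - u).
Proof.
move=> mX r0 muS tx; apply: contrapT => nomeet.
pose S := X `&` ball x r; pose S' := (fun y => t - y) @^-1` S.
have mS : measurable S by apply: measurableI => //; exact: measurable_ball.
have mS' : measurable S'.
  by rewrite -[S']setTI; exact: measurable_reflect.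
have disjSS' : S `&` S' = set0.
  by apply/seteqP; split => // y [[Xy _] [Xty _]]; apply: nomeet; exists y.
have SS'_ball : S `|` S' `<=` ball x (r + r / 2).
  move=> y; rewrite /S' /S /= !ballRE.
  by case=> -[_ /andP[? ?]]; apply/andP; split; lra.
have muSS' : mu (S `|` S') = (mu S + mu S)%E.
  by rewrite -{2}(lebesgue_measure_reflect t mS); exact: measureU.
have : (mu (S `|` S') <= mu (ball x (r + r / 2)))%E.
  by apply: le_measure => //; rewrite inE;
    [exact: measurableU|exact: measurable_ball].
rewrite muSS' lebesgue_measure_ball; last lra.
move: muS; rewrite -/S.
case: (mu S) (measure_ge0 mu S) => [s| |] //= _.
by rewrite lte_fin -EFinD lee_fin -mulr_natr => *; lra.
Qed.

Lemma steinhaus (X : set R) : measurable X -> (0 < mu X)%E ->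
  exists a b, a < b /\ forall t, a < t < b -> exists2 u, X u & X (t - u).
Proof.
move=> mX mX0; have [x [r [r0 muS]]] := lebesgue_density_point mX mX0.
exists (x * 2 - r / 2), (x * 2 + r / 2); split; first lra.
by move=> t; exact: ball_reflect_meet.
Qed.

Lemma lebesgue_measurable_inner (A : set R) :
  lebesgue_measurable A -> ~ mu.-negligible A ->
  exists2 X, measurable X & X `<=` A /\ (0 < mu X)%E.
Proof.
rewrite /lebesgue_measurable -completed_caratheodory_measurable.
rewrite g_sigma_completed_algebra_genE => -[X mX [N negN XNA]] nonneg.
exists X => //; split; first by rewrite -XNA; exact: subsetUl.
rewrite lt0e measure_ge0 andbT; apply/eqP => X0; apply: nonneg.
by rewrite -XNA; apply: negligibleU => //; exact/negligibleP.
Qed.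

Lemma addr_closed_itv (A : set R) :
  (forall x y, A x -> A y -> A (x + y)) -> A `<=` [set x | 0 < x] ->
  lebesgue_measurable A -> ~ mu.-negligible A ->
  exists a b, 0 <= a < b /\ forall t, a < t < b -> A t.
Proof.
move=> addA Apos mA negA.
have [X mX [XA X0]] := lebesgue_measurable_inner mA negA.
have [a [b [ab XX]]] := steinhaus mX X0.
have Aab t : a < t < b -> A t.
  move=> /XX[u Xu Xtu]; rewrite -(subrK u t) addrC.
  by apply: addA; apply: XA.
have mid_pos : 0 < (a + b) / 2 by apply: Apos; apply: Aab; apply/andP; lra.
exists ((a + b) / 2), b; split; first by apply/andP; lra.
by move=> t /andP[? ?]; apply: Aab; apply/andP; lra.
Qed.

End steinhaus.

Lemma mulrn_in_itv {R : archiFieldType} (a b z : R) :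
  0 <= a -> 0 < z -> z < b - a -> exists n, a < z *+ n.+1 < b.
Proof.
move=> a0 z0 zab; exists (Num.truncn (a / z)).
have /andP[] := truncn_itv (divr_ge0 a0 (ltW z0)).
rewrite ler_pdivlMr // ltr_pdivrMr // -mulr_natl mulrSr mulrDl mul1r => *.
by apply/andP; split; lra.
Qed.

Section additive_partition.
Context {R : realType} {k : nat} (H : 'I_k -> set R).
Hypothesis H_disj : forall i j, i != j -> H i `&` H j = set0.
Hypothesis H_cover : \bigcup_(i in setT) H i = [set x : R | 0 < x].
Hypothesis H_add : forall i x y, H i x -> H i y -> H i (x + y).

Lemma class_gt0 i x : H i x -> 0 < x.
Proof.
move=> Hx; have : (\bigcup_(j in setT) H j) x by exists i.
by rewrite H_cover.
Qed.

Lemma class_exists x : 0 < x -> exists i, H i x.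
Proof.
move=> x0; have : [set x : R | 0 < x] x by [].
by rewrite -H_cover => -[i _ Hix]; exists i.
Qed.

Lemma class_uniq i j x : H i x -> H j x -> i = j.
Proof.
move=> Hix Hjx; case: (eqVneq i j) => // ij.
by have : (H i `&` H j) x by []; rewrite H_disj.
Qed.

Lemma class_mulrn i x n : H i x -> H i (x *+ n.+1).
Proof.
move=> Hx; elim: n => [|n IHn]; first by rewrite mulr1n.
by rewrite mulrS; apply: H_add.
Qed.

Lemma class_divn i y n : H i y -> H i (y / n.+1%:R).
Proof.
move=> Hy; have [j Hj] := class_exists (divr_gt0 (class_gt0 Hy) (ltr0Sn R n)).
have := class_mulrn n Hj.
rewrite -[(y / _) *+ _]mulr_natr divfK ?pnatr_eq0 // => Hjy.
by rewrite (class_uniq Hjy Hy) in Hj.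
Qed.

Lemma class_itv_uniq i j a b : 0 <= a < b -> (forall t, a < t < b -> H i t) ->
  H j !=set0 -> j = i.
Proof.
move=> /andP[a0 ab] Hab [y Hy].
have ba0 : 0 < b - a by rewrite subr_gt0.
have [n small] : exists n, y / n.+1%:R < b - a.
  exists (Num.truncn (y / (b - a))).
  rewrite ltr_pdivrMr // mulrC -ltr_pdivrMr //.
  by have /andP[] := truncn_itv (divr_ge0 (ltW (class_gt0 Hy)) (ltW ba0)).
have yn_gt0 : 0 < y / n.+1%:R := divr_gt0 (class_gt0 Hy) (ltr0Sn R n).
have [m /Hab Hi] := mulrn_in_itv a0 yn_gt0 small.
exact: class_uniq (class_mulrn m (class_divn n Hy)) Hi.
Qed.

Lemma class_not_negligible : exists i, ~ (@lebesgue_measure R).-negligible (H i).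
Proof.
apply/existsNP => negH.
pose F n : set R := if insub n is Some i then H i else set0.
have negF : (@lebesgue_measure R).-negligible (\bigcup_n F n).
  apply: negligible_bigcup => n; rewrite /F; case: insub => [i|] //.
  exact: negligible_set0.
have ball_F : ball (1 : R) 1 `<=` \bigcup_n F n.
  move=> y; rewrite ballRE => /andP[y0 _].
  have [i Hy] : exists i, H i y by apply: class_exists; lra.
  by exists (val i) => //; rewrite /F valK.
have := @negligibleS _ (measurableTypeR R) R lebesgue_measure _ _ ball_F negF.
move=> /(negligibleP lebesgue_measure (measurable_ball (1 : R) 1)).
move=> /(etrans (esym (lebesgue_measure_ball 1 ler01)))/eqP.
by rewrite eqe pnatr_eq0.
Qed.

End additive_partition.

Theorem theorem3p3 (R : realType) (k : nat) (H : 'I_k -> set R) :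
  (2 <= k)%N ->
  (forall i, H i !=set0) ->
  (forall i j, i != j -> H i `&` H j = set0) ->
  \bigcup_(i in setT) H i = [set x : R | 0 < x] ->
  (forall i x y, H i x -> H i y -> H i (x + y)) ->
  (forall i x y, H i x -> H i y -> H i (x * y)) ->
  exists i, ~ lebesgue_measurable (H i).
Proof.
move=> k2 H_neq0 H_disj H_cover H_add _; apply/existsNP => H_meas.
have [i negHi] := class_not_negligible H_cover.
have [a [b [ab Hab]]] := addr_closed_itv (H_add i) (class_gt0 H_cover (i := i))
  (H_meas i) negHi.
have [j ji] : exists j : 'I_k, j != i.
  have k0 : (0 < k)%N by apply: leq_trans k2.
  case: (eqVneq i (Ordinal k0)) => [->|]; last by exists (Ordinal k0); rewrite eq_sym.
  by exists (Ordinal k2).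
by move: ji; rewrite (class_itv_uniq H_disj H_cover H_add ab Hab (H_neq0 j)) eqxx.
Qed.
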